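(* Let $X,Y$ be finite presheaves of sets on $\mathscr{V}_f$. Then (1) $X\amalg Y$ is finite; (2) $X\times Y$ is finite; (3) every subpresheaf $U\subset X$ is finite; (4) if $X,Y$ are connected with respective basepoints $x,y$, then the wedge $X\vee Y$ is finite.
   Context: $p$ prime, $\mathbb{F}=\mathbb{F}_p$, $\mathscr{V}_f$ finite-dimensional $\mathbb{F}$-vector spaces; presheaves are contravariant functors $\mathscr{V}_f\to$ Sets, coproduct and product taken sectionwise. $\mathscr{F}$ denotes functors $\mathscr{V}_f^{\mathrm{op}}\to$ ($\mathbb{F}$-vector spaces); such a functor is finite if it has a finite composition series. A presheaf $X$ is finite if there is a monomorphism $X\hookrightarrow F_X$ of presheaves of sets with $F_X\in\mathscr{F}$ finite. $X$ is connected if $|X(0)|=1$; its basepoint is the unique element $x$ of $X(0)$ together with its images in each $X(V)$ (under the map induced by $V\to 0$). The wedge $X\vee Y$ is the coproduct of connected presheaves, i.e. $X$ and $Y$ glued along their basepoints (equivalently the subpresheaf $X\times\{y\}\cup\{x\}\times Y$ of $X\times Y$). *)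

From HB Require Import structures.
From mathcomp Require Import all_boot all_order all_algebra.
From Stdlib Require Import ProofIrrelevance.
Set Implicit Arguments. Unset Strict Implicit. Unset Printing Implicit Defensive.
Import GRing.Theory.
Local Open Scope ring_scope.

(* The category V_f of finite-dimensional F_p-vector spaces is modelled by
   its skeleton: objects are n : nat (standing for F_p^n), a morphism
   F_p^n -> F_p^m is a matrix f : 'M['F_p]_(n,m) acting on row vectors
   (v |-> v *m f), so the composite of f : n -> m and g : m -> k is f *m g. *)

Record presheaf (p : nat) := Presheaf {
  pob :> nat -> Type;
  pact : forall n m, 'M['F_p]_(n, m) -> pob m -> pob n;
  pact1 : forall n (x : pob n), pact 1%:M x = x;
  pactM : forall n m k (f : 'M['F_p]_(n, m)) (g : 'M['F_p]_(m, k)) (x : pob k),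
      pact (f *m g) x = pact f (pact g x)
}.

Record vfunctor (p : nat) := VFunctor {
  vob : nat -> lmodType 'F_p;
  vact : forall n m, 'M['F_p]_(n, m) -> vob m -> vob n;
  vact_lin : forall n m (f : 'M['F_p]_(n, m)) (a : 'F_p) (u v : vob m),
      vact f (a *: u + v) = a *: vact f u + vact f v;
  vact1 : forall n (x : vob n), vact 1%:M x = x;
  vactM : forall n m k (f : 'M['F_p]_(n, m)) (g : 'M['F_p]_(m, k)) (x : vob k),
      vact (f *m g) x = vact f (vact g x)
}.

Definition subfunctor p (F : vfunctor p) (S : forall n, vob F n -> Prop) : Prop :=
  [/\ (forall n, S n 0),
      (forall n u v, S n u -> S n v -> S n (u + v)),
      (forall n (a : 'F_p) v, S n v -> S n (a *: v)) &
      (forall n m (f : 'M['F_p]_(n, m)) v, S m v -> S n (@vact p F n m f v))].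

Definition subfun_le p (F : vfunctor p) (S T : forall n, vob F n -> Prop) : Prop :=
  forall n v, S n v -> T n v.

Definition subfun_eq p (F : vfunctor p) (S T : forall n, vob F n -> Prop) : Prop :=
  forall n v, S n v <-> T n v.

(* T / S is a simple functor, for subfunctors S <= T: T/S is nonzero, and
   (through the correspondence between subfunctors of T/S and subfunctors
   between S and T) T/S has no subfunctors other than 0 and itself. *)
Definition simple_quotient p (F : vfunctor p) (S T : forall n, vob F n -> Prop) : Prop :=
  [/\ subfunctor S, subfunctor T, subfun_le S T,
      (exists n v, T n v /\ ~ S n v) &
      (forall G, subfunctor G -> subfun_le S G -> subfun_le G T ->
         subfun_eq G S \/ subfun_eq G T)].

Definition finite_vfunctor p (F : vfunctor p) : Prop :=
  exists (k : nat) (S : nat -> forall n, vob F n -> Prop),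
    [/\ (forall n v, S 0%N n v <-> v = 0),
        (forall n v, S k n v) &
        (forall i, (i < k)%N -> simple_quotient (S i) (S i.+1))].

Definition finite_presheaf p (X : presheaf p) : Prop :=
  exists (F : vfunctor p) (iota : forall n, X n -> vob F n),
    [/\ finite_vfunctor F,
        (forall n, injective (iota n)) &
        (forall n m (f : 'M['F_p]_(n, m)) (x : X m),
           iota n (pact f x) = @vact p F n m f (iota m x))].

Section Constructions.
Variable p : nat.

Definition coprod_act (X Y : presheaf p) n m (f : 'M['F_p]_(n, m))
  (z : (X m + Y m)%type) : (X n + Y n)%type :=
  match z with inl x => inl (pact f x) | inr y => inr (pact f y) end.

Lemma coprod_act1 (X Y : presheaf p) n (z : (X n + Y n)%type) :
  coprod_act 1%:M z = z.
Proof. by case: z => z /=; rewrite pact1. Qed.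

Lemma coprod_actM (X Y : presheaf p) n m k (f : 'M['F_p]_(n, m))
  (g : 'M['F_p]_(m, k)) (z : (X k + Y k)%type) :
  coprod_act (f *m g) z = coprod_act f (coprod_act g z).
Proof. by case: z => z /=; rewrite pactM. Qed.

Definition coprod_presheaf (X Y : presheaf p) : presheaf p :=
  @Presheaf p (fun n => (X n + Y n)%type) (@coprod_act X Y)
    (@coprod_act1 X Y) (@coprod_actM X Y).

Definition prod_act (X Y : presheaf p) n m (f : 'M['F_p]_(n, m))
  (z : (X m * Y m)%type) : (X n * Y n)%type :=
  (pact f z.1, pact f z.2).

Lemma prod_act1 (X Y : presheaf p) n (z : (X n * Y n)%type) :
  prod_act 1%:M z = z.
Proof. by case: z => a b; rewrite /prod_act /= !pact1. Qed.

Lemma prod_actM (X Y : presheaf p) n m k (f : 'M['F_p]_(n, m))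
  (g : 'M['F_p]_(m, k)) (z : (X k * Y k)%type) :
  prod_act (f *m g) z = prod_act f (prod_act g z).
Proof. by case: z => a b; rewrite /prod_act /= !pactM. Qed.

Definition prod_presheaf (X Y : presheaf p) : presheaf p :=
  @Presheaf p (fun n => (X n * Y n)%type) (@prod_act X Y)
    (@prod_act1 X Y) (@prod_actM X Y).

Definition subpresheaf (X : presheaf p) (U : forall n, X n -> Prop) : Prop :=
  forall n m (f : 'M['F_p]_(n, m)) (x : X m), U m x -> U n (pact f x).

Definition sub_act (X : presheaf p) (U : forall n, X n -> Prop)
  (hU : subpresheaf U) n m (f : 'M['F_p]_(n, m)) (z : {x : X m | U m x}) :
  {x : X n | U n x} :=
  exist _ (pact f (proj1_sig z)) (hU n m f _ (proj2_sig z)).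

Lemma sub_act1 (X : presheaf p) U (hU : subpresheaf U) n (z : {x : X n | U n x}) :
  sub_act hU 1%:M z = z.
Proof.
case: z => x ux; rewrite /sub_act /=.
move: (hU n n 1%:M x ux); rewrite pact1 => h.
by rewrite (proof_irrelevance _ h ux).
Qed.

Lemma sub_actM (X : presheaf p) U (hU : subpresheaf U) n m k (f : 'M['F_p]_(n, m))
  (g : 'M['F_p]_(m, k)) (z : {x : X k | U k x}) :
  sub_act hU (f *m g) z = sub_act hU f (sub_act hU g z).
Proof.
case: z => x ux; rewrite /sub_act /=.
move: (hU n k (f *m g) x ux) (hU n m f _ (hU m k g x ux)).
rewrite pactM => h1 h2.
by rewrite (proof_irrelevance _ h1 h2).
Qed.

Definition sub_presheaf (X : presheaf p) (U : forall n, X n -> Prop)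
  (hU : subpresheaf U) : presheaf p :=
  @Presheaf p (fun n => {x : X n | U n x}) (@sub_act X U hU)
    (@sub_act1 X U hU) (@sub_actM X U hU).

Definition connected (X : presheaf p) : Prop :=
  exists x : X 0%N, forall y : X 0%N, y = x.

Definition basept (X : presheaf p) (x : X 0%N) n : X n :=
  pact (0 : 'M['F_p]_(n, 0)) x.

Definition wedge_pred (X Y : presheaf p) (x : X 0%N) (y : Y 0%N) n
  (z : prod_presheaf X Y n) : Prop :=
  z.2 = basept y n \/ z.1 = basept x n.

Lemma basept_act (X : presheaf p) (x : X 0%N) n m (f : 'M['F_p]_(n, m)) :
  pact f (basept x m) = basept x n.
Proof. by rewrite /basept -pactM mulmx0. Qed.

Lemma wedge_sub (X Y : presheaf p) (x : X 0%N) (y : Y 0%N) :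
  subpresheaf (wedge_pred x y).
Proof.
move=> n m f [a b]; rewrite /wedge_pred /= => -[-> | ->].
  by left; rewrite basept_act.
by right; rewrite basept_act.
Qed.

Arguments wedge_sub [X Y] x y.

Definition wedge_presheaf (X Y : presheaf p) (x : X 0%N) (y : Y 0%N) : presheaf p :=
  sub_presheaf (wedge_sub x y).

End Constructions.

From HB Require Import structures.
From mathcomp Require Import all_boot all_order all_algebra.
From Stdlib Require Import ProofIrrelevance Classical.
Set Implicit Arguments. Unset Strict Implicit. Unset Printing Implicit Defensive.
Import GRing.Theory.
Local Open Scope ring_scope.

(* A finite presheaf is a subpresheaf of a finite functor, so restricting the
   embedding shows that subpresheaves, in particular the wedge (a subpresheaf
   of X x Y), are finite. If X and Y embed into F and G, then X x Y embeds
   into F (+) G and X + Y into F (+) G (+) F_p, the constant functor F_p being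
   simple and tagging the summand. Finally F (+) G is finite: composition
   series S_i of F and T_j of G give the series S_i (+) 0, then F (+) T_j,
   whose factors are those of F and of G, because S (+) B < T (+) B (and
   A (+) S < A (+) T) is the pullback of S < T along a split projection. *)

Section InjectionsIntoPairs.
Variables (R : pzRingType) (U V : lmodType R).

Definition in_fst (u : U) : U * V := (u, 0).
Definition in_snd (v : V) : U * V := (0, v).

Fact in_fst_is_linear : linear in_fst.
Proof. by move=> a u v; congr pair; rewrite /= scaler0 addr0. Qed.

Fact in_snd_is_linear : linear in_snd.
Proof. by move=> a u v; congr pair; rewrite /= scaler0 addr0. Qed.

HB.instance Definition _ :=
  GRing.isLinear.Build R U (U * V)%type _ in_fst in_fst_is_linear.
HB.instance Definition _ :=
  GRing.isLinear.Build R V (U * V)%type _ in_snd in_snd_is_linear.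

End InjectionsIntoPairs.

Arguments in_fst {R U V}.
Arguments in_snd {R U V}.

Section VFunctors.
Variable p : nat.
Implicit Types E F G : vfunctor p.

Lemma vact0 F n m (f : 'M['F_p]_(n, m)) : @vact p F n m f 0 = 0.
Proof. by have := @vact_lin p F _ _ f (-1) 0 0; rewrite scaler0 addr0 scaleN1r addNr. Qed.

Definition natural E F (phi : forall n, {linear vob E n -> vob F n}) :=
  forall n m (f : 'M['F_p]_(n, m)) v, phi n (vact f v) = vact f (phi m v).

Section Subfunctors.
Variable F : vfunctor p.
Implicit Types S T C : forall n, vob F n -> Prop.

Lemma subfunctor0 : subfunctor (fun n (v : vob F n) => v = 0).
Proof.
split=> [n | n u v -> -> | n a v -> | n m f v ->] //.
- by rewrite addr0.
- by rewrite scaler0.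
- by rewrite vact0.
Qed.

Lemma subfunctor_eq S T : subfun_eq S T -> subfunctor S -> subfunctor T.
Proof.
move=> eqST [S0 SD SZ Sact]; split=> [n | n u v | n a v | n m f v].
- exact/eqST.
- by move=> /eqST Su /eqST Sv; apply/eqST/SD.
- by move=> /eqST Sv; apply/eqST/SZ.
- by move=> /eqST Sv; apply/eqST/Sact.
Qed.

Lemma subfunctorB S n u v : subfunctor S -> S n u -> S n v -> S n (u - v).
Proof. by case=> _ SD SZ _ Su Sv; apply: SD => //; rewrite -scaleN1r; apply: SZ. Qed.

Lemma subfunctorI S C :
  subfunctor S -> subfunctor C -> subfunctor (fun n v => S n v /\ C n v).
Proof.
case=> S0 SD SZ Sact [C0 CD CZ Cact]; split=> [n | n u v | n a v | n m f v].
- by split.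
- by case=> Su Cu [Sv Cv]; split; [apply: SD | apply: CD].
- by case=> Sv Cv; split; [apply: SZ | apply: CZ].
- by case=> Sv Cv; split; [apply: Sact | apply: Cact].
Qed.

Lemma simple_quotient_eq S T S' T' :
  subfun_eq S S' -> subfun_eq T T' -> simple_quotient S T -> simple_quotient S' T'.
Proof.
move=> eqS eqT [sS sT leST [n [v [Tv nSv]]] maxST]; split.
- exact: subfunctor_eq sS.
- exact: subfunctor_eq sT.
- by move=> k w /eqS /leST /eqT.
- by exists n, v; split; [apply/eqT | move/eqS].
move=> H sH leSH leHT.
have [eqHS | eqHT] := maxST H sH (fun k w Sw => leSH k w (proj1 (eqS k w) Sw))
                              (fun k w Hw => proj2 (eqT k w) (leHT k w Hw)).
- by left=> k w; rewrite eqHS eqS.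
- by right=> k w; rewrite eqHT eqT.
Qed.

End Subfunctors.

Lemma subfunctor_preim E F (phi : forall n, {linear vob E n -> vob F n}) S :
  natural phi -> subfunctor S -> subfunctor (fun n v => S n (phi n v)).
Proof.
move=> nat_phi [S0 SD SZ Sact]; split=> [n | n u v Su Sv | n a v Sv | n m f v Sv].
- by rewrite linear0.
- by rewrite linearD; apply: SD.
- by rewrite linearZ; apply: SZ.
- by rewrite nat_phi; apply: Sact.
Qed.

Lemma simple_quotient_preim E F (pi : forall n, {linear vob E n -> vob F n})
    (iota : forall n, {linear vob F n -> vob E n}) (C : forall n, vob E n -> Prop) S T :
  natural pi -> natural iota -> (forall n, cancel (iota n) (pi n)) ->
  subfunctor C -> (forall n u, C n (iota n u)) -> simple_quotient S T ->
  simple_quotient (fun n v => S n (pi n v) /\ C n v)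
                  (fun n v => T n (pi n v) /\ C n v).
Proof.
move=> nat_pi nat_iota piK sC C_iota [sS sT leST [n0 [v0 [Tv0 nSv0]]] maxST].
split.
- exact: subfunctorI (subfunctor_preim nat_pi sS) sC.
- exact: subfunctorI (subfunctor_preim nat_pi sT) sC.
- by move=> n v [/leST].
- by exists n0, (iota n0 v0); rewrite piK; split=> // -[].
move=> H sH leSH leHT.
have Hiota_S n u : S n u -> H n (iota n u) by move=> Su; apply: leSH; rewrite piK.
have leHiotaT : subfun_le (fun n u => H n (iota n u)) T.
  by move=> n u /leHT []; rewrite piK.
have H_ker n v : C n v -> H n (v - iota n (pi n v)).
  move=> Cv; apply: leSH; split; last exact: subfunctorB.
  by rewrite linearB /= piK subrr; case: sS.
have [eqS | eqT] := maxST _ (subfunctor_preim nat_iota sH) Hiota_S leHiotaT.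
- left=> n v; split=> [Hv | /leSH //]; have [_ Cv] := leHT n v Hv.
  split=> //; apply/eqS; rewrite -[iota n _](subKr v).
  exact: subfunctorB (H_ker n v Cv).
- right=> n v; split=> [/leHT // | [Tpv Cv]].
  rewrite -(subrK (iota n (pi n v)) v); case: sH => _ HD _ _.
  by apply: HD; [apply: H_ker | apply/eqT].
Qed.

Definition sum_vact F G n m (f : 'M['F_p]_(n, m)) (z : vob F m * vob G m) :
    vob F n * vob G n :=
  (vact f z.1, vact f z.2).

Fact sum_vact_lin F G n m (f : 'M['F_p]_(n, m)) a (u v : vob F m * vob G m) :
  sum_vact f (a *: u + v) = a *: sum_vact f u + sum_vact f v.
Proof. by rewrite /sum_vact /= !vact_lin. Qed.

Fact sum_vact1 F G n (z : vob F n * vob G n) : sum_vact 1%:M z = z.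
Proof. by case: z => u v; rewrite /sum_vact /= !vact1. Qed.

Fact sum_vactM F G n m k (f : 'M['F_p]_(n, m)) (g : 'M['F_p]_(m, k))
    (z : vob F k * vob G k) :
  sum_vact (f *m g) z = sum_vact f (sum_vact g z).
Proof. by rewrite /sum_vact /= !vactM. Qed.

Definition sum_vfunctor F G : vfunctor p :=
  @VFunctor p (fun n => (vob F n * vob G n)%type : lmodType 'F_p)
    (@sum_vact F G) (@sum_vact_lin F G) (@sum_vact1 F G) (@sum_vactM F G).

Section SumProjections.
Variables F G : vfunctor p.

Lemma natural_fst : natural (fun n => fst : {linear vob (sum_vfunctor F G) n -> _}).
Proof. by []. Qed.

Lemma natural_snd : natural (fun n => snd : {linear vob (sum_vfunctor F G) n -> _}).
Proof. by []. Qed.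

Lemma natural_in_fst :
  natural (fun n => in_fst : {linear _ -> vob (sum_vfunctor F G) n}).
Proof. by move=> n m f u; rewrite /in_fst /= /sum_vact /= vact0. Qed.

Lemma natural_in_snd :
  natural (fun n => in_snd : {linear _ -> vob (sum_vfunctor F G) n}).
Proof. by move=> n m f u; rewrite /in_snd /= /sum_vact /= vact0. Qed.

End SumProjections.

Lemma finite_sum_vfunctor F G :
  finite_vfunctor F -> finite_vfunctor G -> finite_vfunctor (sum_vfunctor F G).
Proof.
move=> [kF [SF [SF0 SFk SFs]]] [kG [SG [SG0 SGk SGs]]].
have sSG0 : subfunctor (SG 0%N).
  by apply: (subfunctor_eq _ (subfunctor0 G)) => n v; split=> /SG0.
exists (kF + kG)%N, (fun i n z => SF (minn i kF) n z.1 /\ SG (i - kF)%N n z.2).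
split.
- move=> n [u v] /=; rewrite min0n sub0n.
  split=> [[/SF0 -> /SG0 ->] // | [-> ->]].
  by split; [apply/SF0 | apply/SG0].
- move=> n [u v]; rewrite (minn_idPr (leq_addr _ _)) addKn.
  by split; [apply: SFk | apply: SGk].
move=> i lt_i_k; have [lt_i_kF | le_kF_i] := ltnP i kF.
- rewrite (minn_idPl lt_i_kF) (eqP lt_i_kF) (eqP (ltnW lt_i_kF)).
  exact: (simple_quotient_preim
            (C := fun n (z : vob (sum_vfunctor F G) n) => SG 0%N n z.2)
            (@natural_fst F G) (@natural_in_fst F G) (fun _ _ => erefl)
            (subfunctor_preim (@natural_snd F G) sSG0)
            (fun n _ => proj2 (SG0 n 0) erefl) (SFs _ lt_i_kF)).
- rewrite (minn_idPr (leqW le_kF_i)) (subSn le_kF_i).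
  have sSFk : subfunctor (SF kF) by split=> *; apply: SFk.
  have lt_ikF_kG : (i - kF < kG)%N by rewrite ltn_subLR.
  have := simple_quotient_preim
            (C := fun n (z : vob (sum_vfunctor F G) n) => SF kF n z.1)
            (@natural_snd F G) (@natural_in_snd F G) (fun _ _ => erefl)
            (subfunctor_preim (@natural_fst F G) sSFk)
            (fun n _ => SFk n 0) (SGs _ lt_ikF_kG).
  by apply: simple_quotient_eq => n z /=; apply: and_comm.
Qed.

Definition const_vfunctor : vfunctor p :=
  @VFunctor p (fun=> ('F_p)^o) (fun n m f a => a)
    (fun _ _ _ _ _ _ => erefl) (fun _ _ => erefl) (fun _ _ _ _ _ _ => erefl).

Lemma finite_vfunctor_simple F :
  simple_quotient (fun n (v : vob F n) => v = 0) (fun _ _ => True) ->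
  finite_vfunctor F.
Proof. by exists 1%N, (fun i n v => if i is 0 then v = 0 else True); split=> // -[]. Qed.

Lemma finite_const_vfunctor : finite_vfunctor const_vfunctor.
Proof.
apply: finite_vfunctor_simple; split=> //.
- exact: subfunctor0.
- by exists 0%N, 1; split=> //; apply/eqP; apply: oner_neq0.
move=> H [_ _ HZ Hact] leH0 _.
have [[m [w [Hw nz_w]]] | H_0] := classic (exists m w, H m w /\ w <> 0).
- right=> n v; split=> // _.
  have Hm1 : H m 1 by rewrite -(mulVf (introN eqP nz_w)); apply: HZ.
  by rewrite -[v]mulr1; apply: HZ; apply: (Hact n m 0).
- left=> n v; split=> [Hv | ->]; last exact: leH0.
  by apply: NNPP => nz_v; apply: H_0; exists n, v.
Qed.

End VFunctors.

Section Presheaves.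
Variable p : nat.
Implicit Types X Y : presheaf p.

Lemma finite_presheaf_mono X Y (j : forall n, X n -> Y n) :
  (forall n, injective (j n)) ->
  (forall n m (f : 'M['F_p]_(n, m)) x, j n (pact f x) = pact f (j m x)) ->
  finite_presheaf Y -> finite_presheaf X.
Proof.
move=> inj_j nat_j [F [iota [fF inj_iota nat_iota]]].
exists F, (fun n x => iota n (j n x)); split=> //.
- by move=> n x y /inj_iota /inj_j.
- by move=> n m f x; rewrite nat_j nat_iota.
Qed.

Lemma finite_sub_presheaf X (U : forall n, X n -> Prop) (hU : subpresheaf U) :
  finite_presheaf X -> finite_presheaf (sub_presheaf hU).
Proof.
apply: (finite_presheaf_mono (j := fun n (z : sub_presheaf hU n) => proj1_sig z)) => // n.
exact: eq_sig_hprop (fun x => @proof_irrelevance _).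
Qed.

Lemma finite_prod_presheaf X Y :
  finite_presheaf X -> finite_presheaf Y -> finite_presheaf (prod_presheaf X Y).
Proof.
move=> [F [iF [fF injF natF]]] [G [iG [fG injG natG]]].
exists (sum_vfunctor F G), (fun n z => (iF n z.1, iG n z.2)); split.
- exact: finite_sum_vfunctor.
- by move=> n [x1 y1] [x2 y2] [/injF -> /injG ->].
- by move=> n m f [x y]; rewrite /= natF natG.
Qed.

Lemma finite_coprod_presheaf X Y :
  finite_presheaf X -> finite_presheaf Y -> finite_presheaf (coprod_presheaf X Y).
Proof.
move=> [F [iF [fF injF natF]]] [G [iG [fG injG natG]]].
pose tag n (z : coprod_presheaf X Y n) :
    vob (sum_vfunctor (sum_vfunctor F G) (const_vfunctor p)) n :=
  match z with
  | inl x => (in_fst (iF n x), 0)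
  | inr y => (in_snd (iG n y), 1)
  end.
exists _, tag; split.
- apply: finite_sum_vfunctor; last exact: finite_const_vfunctor.
  exact: finite_sum_vfunctor.
- move=> n [x1 | y1] [x2 | y2] /= e.
  + by case: e => /injF ->.
  + by have /eqP := congr1 snd e; rewrite eq_sym oner_eq0.
  + by have /eqP := congr1 snd e; rewrite oner_eq0.
  + by case: e => /injG ->.
- by move=> n m f [x | y]; rewrite /= ?natF ?natG ?natural_in_fst ?natural_in_snd.
Qed.

End Presheaves.

Theorem lemma3p4 (p : nat) (hp : prime p) (X Y : presheaf p) :
  finite_presheaf X -> finite_presheaf Y ->
  [/\ finite_presheaf (coprod_presheaf X Y),
      finite_presheaf (prod_presheaf X Y),
      (forall (U : forall n, X n -> Prop) (hU : subpresheaf U),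
         finite_presheaf (sub_presheaf hU)) &
      (forall (x : X 0%N) (y : Y 0%N), connected X -> connected Y ->
         finite_presheaf (wedge_presheaf x y))].
Proof.
move=> fX fY; split.
- exact: finite_coprod_presheaf.
- exact: finite_prod_presheaf.
- by move=> U hU; apply: finite_sub_presheaf.
- by move=> x y _ _; apply/finite_sub_presheaf/finite_prod_presheaf.
Qed.
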